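(* Let $V\ge 1$ be the vocabulary size and let $\phi_t(\mathbf{x})\in\mathbb{R}^V$ be the normalized tf-idf feature vector of a text document $\mathbf{x}$, so that all entries of $\phi_t(\mathbf{x})$ are nonnegative and $\|\phi_t(\mathbf{x})\|_2=1$. Let $\mathbf{w}_p,\mathbf{w}_n\in\mathbb{R}^V$ be label embeddings of two labels $p,n$ with $\|\mathbf{w}_p\|_2\le 1$, $\|\mathbf{w}_n\|_2\le 1$ and all entries nonnegative. For $l\in\{p,n\}$ let $\mathbb{K}_l\subseteq\{1,\dots,V\}$ be a set of selected keywords and let $\mathbf{v}_l\in\mathbb{R}^V$ be the keyword-selected label embedding, defined by $v_{li}=w_{li}$ if $i\in\mathbb{K}_l$ and $v_{li}=0$ otherwise. Let $\delta>0$ and assume that both $\mathbf{v}_p$ and $\mathbf{v}_n$ are $\delta$-bounded, i.e. $\langle\phi_t(\mathbf{x}),\mathbf{v}_l\rangle\ge\langle\phi_t(\mathbf{x}),\mathbf{w}_l\rangle-\delta$ for $l\in\{p,n\}$. For a feature vector $\phi$ and embeddings $\mathbf{a},\mathbf{b}$, define the error margin $\mu(\phi,\mathbf{a},\mathbf{b})=\langle\phi,\mathbf{a}-\mathbf{b}\rangle$. Then $$\bigl|\mu(\phi_t(\mathbf{x}),\mathbf{w}_p,\mathbf{w}_n)-\mu(\phi_t(\mathbf{x}),\mathbf{v}_p,\mathbf{v}_n)\bigr|\le\delta.$$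
   Context: Setting: label embeddings are vectors in $\mathbb{R}^V$ indexed by vocabulary words, with nonnegative entries and Euclidean norm at most 1; the text feature $\phi_t(\mathbf{x})$ is a nonnegative tf-idf vector of unit Euclidean norm. Keyword selection zeroes out all coordinates of a label embedding outside the chosen keyword set. *)

From HB Require Import structures.
From mathcomp Require Import all_boot all_order all_algebra.
From mathcomp Require Import reals.
Set Implicit Arguments. Unset Strict Implicit. Unset Printing Implicit Defensive.
Import Order.TTheory GRing.Theory Num.Theory.
Local Open Scope ring_scope.

Definition dotv (R : realType) (V : nat) (a b : 'rV[R]_V) : R :=
  \sum_(i < V) a 0 i * b 0 i.

Definition norm2 (R : realType) (V : nat) (a : 'rV[R]_V) : R :=
  Num.sqrt (dotv a a).

Definition nonneg_vec (R : realType) (V : nat) (a : 'rV[R]_V) : Prop :=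
  forall i : 'I_V, 0 <= a 0 i.

Definition select_kw (R : realType) (V : nat) (K : {set 'I_V}) (w : 'rV[R]_V)
  : 'rV[R]_V := \row_(i < V) (if i \in K then w 0 i else 0).

Definition margin (R : realType) (V : nat) (phi a b : 'rV[R]_V) : R :=
  dotv phi (a - b).

(* Since phi and w have nonnegative entries, keyword selection can only
   decrease <phi, w>; by delta-boundedness each of the two inner products
   therefore drops by an amount in [0, delta], and the difference of two such
   drops lies in [-delta, delta]. *)
From HB Require Import structures.
From mathcomp Require Import all_boot all_order all_algebra.
From mathcomp Require Import reals.
From mathcomp Require Import lra.
Import Order.TTheory GRing.Theory Num.Theory.
Local Open Scope ring_scope.

Lemma dotvB (R : realType) (V : nat) (phi a b : 'rV[R]_V) :
  dotv phi (a - b) = dotv phi a - dotv phi b.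
Proof. by rewrite /dotv -sumrB; apply: eq_bigr => i _; rewrite !mxE mulrBr. Qed.

Lemma marginE (R : realType) (V : nat) (phi a b : 'rV[R]_V) :
  margin phi a b = dotv phi a - dotv phi b.
Proof. exact: dotvB. Qed.

Lemma dotv_select_kw_le (R : realType) (V : nat) (K : {set 'I_V})
    (phi w : 'rV[R]_V) :
  nonneg_vec phi -> nonneg_vec w -> dotv phi (select_kw K w) <= dotv phi w.
Proof.
move=> phi_ge0 w_ge0; apply: ler_sum => i _; rewrite mxE.
by case: (i \in K); rewrite ?mulr0 ?mulr_ge0.
Qed.

Lemma dist_subB_le (R : realDomainType) (a b c d delta : R) :
  a - delta <= c <= a -> b - delta <= d <= b ->
  `|(a - b) - (c - d)| <= delta.
Proof. by move=> /andP[? ?] /andP[? ?]; rewrite ler_norml; apply/andP; split; lra. Qed.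

Theorem lemma1 (R : realType) (V : nat) (hV : (1 <= V)%N)
  (phi wp wn : 'rV[R]_V) (Kp Kn : {set 'I_V}) (delta : R)
  (hphi_nn : nonneg_vec phi) (hphi_norm : norm2 phi = 1)
  (hwp_nn : nonneg_vec wp) (hwn_nn : nonneg_vec wn)
  (hwp_norm : norm2 wp <= 1) (hwn_norm : norm2 wn <= 1)
  (hdelta : 0 < delta)
  (hbp : dotv phi (select_kw Kp wp) >= dotv phi wp - delta)
  (hbn : dotv phi (select_kw Kn wn) >= dotv phi wn - delta) :
  `| margin phi wp wn - margin phi (select_kw Kp wp) (select_kw Kn wn) | <= delta.
Proof.
rewrite !marginE; apply: dist_subB_le; apply/andP; split=> //.
- exact: dotv_select_kw_le.
- exact: dotv_select_kw_le.
Qed.
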